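(* Fix $r,\nu,\mu\in\mathbb R$, $\eta>0$, $\sigma>0$, $s_0>0$, $\lambda>0$, $\gamma>0$, and for $T>0$ let $$\rho^*(T)=\frac{\eta T}{W\left(\lambda\gamma s_0\eta^2Te^{(\nu-\frac{\eta^2}{2})T}\right)}\frac{\mu-r}{\sigma},$$ where $W$ is the Lambert function. Then $$\rho^*(T)=\frac{\mu-r}{\sigma}\left(\frac1{\eta s_0\lambda\gamma}+\left(\eta-\frac{\nu-\frac{\eta^2}{2}}{\eta s_0\lambda\gamma}\right)T\right)+T\epsilon(T),\quad\text{with }\lim_{T\to0^+}\epsilon(T)=0.$$ Moreover, if $\nu>\frac{\eta^2}{2}$, then $$\lim_{T\to+\infty}\rho^*(T)=\frac{\mu-r}{\sigma}\frac{\eta}{\nu-\frac{\eta^2}{2}}.$$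
   Context: The Lambert function $W$ is the inverse of the bijection $x\in(-1,+\infty)\mapsto xe^x\in(-1/e,+\infty)$. *)

From Stdlib Require Import Reals Lra ClassicalEpsilon.
From Coquelicot Require Import Coquelicot.
Open Scope R_scope.

(* The Lambert function W: inverse of the bijection
   x in (-1,+oo) |-> x e^x in (-1/e,+oo).
   For y in the range, LambertW y is the (unique) x > -1 with x * exp x = y;
   outside the range it is an arbitrary junk value chosen by epsilon. *)
Definition LambertW (y : R) : R :=
  epsilon (inhabits 0) (fun x => -1 < x /\ x * exp x = y).

Definition rho_star (r nu mu eta sigma s0 lambda gamma T : R) : R :=
  eta * T / LambertW (lambda * gamma * s0 * eta ^ 2 * T
                        * exp ((nu - eta ^ 2 / 2) * T))
  * ((mu - r) / sigma).

From Stdlib Require Import Reals Lra ClassicalEpsilon.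
From Coquelicot Require Import Coquelicot.
Open Scope R_scope.

(* Put k = lambda gamma s0 eta^2, a = nu - eta^2/2 and write
   W(k T e^(a T)) = a T + v(T).  The defining equation of W becomes the
   fixed-point equation v = (k e^(-v) - a) T, and rho^*(T) equals both
   (mu - r)/sigma * eta e^v / k and (mu - r)/sigma * eta / (a + v/T).
   As T -> 0+, v = O(T) and v/T = k e^(-v) - a -> k - a, so expanding
   e^v = 1 + v (1 + o(1)) yields the first-order expansion.  When a > 0 the
   fixed-point equation traps v in (-a/k, k/a) for every T, so v/T -> 0 as
   T -> +oo. *)

Lemma LambertW_spec y : 0 < y -> 0 < LambertW y /\ LambertW y * exp (LambertW y) = y.
Proof.
  intros Hy.
  assert (Hex : exists x, -1 < x /\ x * exp x = y).
  { assert (Hc : continuity (fun x => x * exp x - y)) by reg.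
    assert (H1 : 1 + y < exp y) by (apply exp_ineq1; lra).
    destruct (IVT (fun x => x * exp x - y) 0 y Hc Hy) as [z [Hz1 Hz2]].
    - rewrite exp_0; lra.
    - nra.
    - exists z; split; lra. }
  destruct (epsilon_spec (inhabits 0) _ Hex) as [_ Hw].
  unfold LambertW; set (w := epsilon _ _) in *.
  split; [|exact Hw].
  pose proof (exp_pos w); nra.
Qed.

(* At u = 0 Rocq's division gives the junk value 0, which is also the limit
   at 0: hence the continuity at 0 and the factorization for every u. *)
Definition expm1_remainder (u : R) : R := (exp u - 1 - u) / u.

Lemma exp_sub1_factor u : exp u - 1 = u * (1 + expm1_remainder u).
Proof.
  destruct (Req_dec u 0) as [->|Hu].
  - rewrite exp_0; ring.
  - unfold expm1_remainder; field; exact Hu.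
Qed.

Lemma expm1_remainder_continuous_0 : continuity_pt expm1_remainder 0.
Proof.
  apply continuity_pt_filterlim'.
  replace (expm1_remainder 0) with (1 - 1)
    by (unfold expm1_remainder; rewrite exp_0, Rminus_0_r, Rminus_eq_0, Rdiv_0_l; ring).
  eapply filterlim_ext_loc;
    [|exact (is_lim_minus' _ _ 0 1 1 is_lim_div_expm1_0 (is_lim_const 1 0))].
  exists (mkposreal 1 Rlt_0_1); intros u _ Hu.
  unfold expm1_remainder; field; exact Hu.
Qed.

Definition taylor_defect (k a u : R) : R :=
  (k * exp (- u) - a) * (1 + expm1_remainder u) - (k - a).

Lemma taylor_defect_0 k a : taylor_defect k a 0 = 0.
Proof.
  unfold taylor_defect, expm1_remainder.
  rewrite Ropp_0, exp_0, Rminus_0_r, Rminus_eq_0, Rdiv_0_l; ring.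
Qed.

Lemma taylor_defect_continuous_0 k a : continuity_pt (taylor_defect k a) 0.
Proof. pose proof expm1_remainder_continuous_0; unfold taylor_defect; reg. Qed.

Definition lambert_shift (k a T : R) : R := LambertW (k * T * exp (a * T)) - a * T.

Section LambertShift.

Variables k a : R.
Hypothesis k_gt0 : 0 < k.

Lemma LambertW_scaled_spec T : 0 < T ->
  0 < LambertW (k * T * exp (a * T)) /\
  LambertW (k * T * exp (a * T)) * exp (lambert_shift k a T) = k * T.
Proof.
  intros HT.
  assert (Hy : 0 < k * T * exp (a * T))
    by (pose proof (exp_pos (a * T)); repeat apply Rmult_lt_0_compat; lra).
  destruct (LambertW_spec _ Hy) as [Hw Hwe].
  split; [exact Hw|].
  unfold lambert_shift; unfold Rminus; rewrite exp_plus, <- Rmult_assoc, Hwe, exp_Ropp.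
  field; apply Rgt_not_eq, exp_pos.
Qed.

Lemma lambert_shift_fixpoint T : 0 < T ->
  lambert_shift k a T = (k * exp (- lambert_shift k a T) - a) * T.
Proof.
  intros HT; destruct (LambertW_scaled_spec T HT) as [_ Hw].
  set (v := lambert_shift k a T) in *.
  replace ((k * exp (- v) - a) * T) with (k * T * exp (- v) - a * T) by ring.
  rewrite <- Hw, Rmult_assoc, <- exp_plus, Rplus_opp_r, exp_0, Rmult_1_r.
  reflexivity.
Qed.

Lemma ratio_LambertW_exp T : 0 < T ->
  T / LambertW (k * T * exp (a * T)) = exp (lambert_shift k a T) / k.
Proof.
  intros HT; destruct (LambertW_scaled_spec T HT) as [Hw Hwe].
  transitivity (LambertW (k * T * exp (a * T)) * exp (lambert_shift k a T) / k
                / LambertW (k * T * exp (a * T))).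
  - rewrite Hwe; field; lra.
  - field; lra.
Qed.

Lemma ratio_LambertW_shift T : 0 < T ->
  T / LambertW (k * T * exp (a * T)) = / (a + lambert_shift k a T / T).
Proof.
  intros HT; destruct (LambertW_scaled_spec T HT) as [Hw _].
  unfold lambert_shift in *; field; lra.
Qed.

Lemma lambert_shift_cvg_0 : filterlim (lambert_shift k a) (at_right 0) (locally 0).
Proof.
  set (C := k * exp (Rabs a) + Rabs a).
  assert (Hlin : forall s, filterlim (fun T => s * C * T) (at_right 0) (locally 0)).
  { intros s; replace 0 with (s * C * 0) at 2 by ring.
    apply (filterlim_filter_le_1 (F := locally 0)); [apply filter_le_within|].
    apply continuity_pt_filterlim; reg. }
  apply (filterlim_le_le (fun T => -1 * C * T) _ (fun T => 1 * C * T) 0);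
    [|apply Hlin|apply Hlin].
  exists (mkposreal 1 Rlt_0_1); intros T HT1 HT; simpl in HT1.
  apply Rabs_def2 in HT1; rewrite Rminus_0_r in HT1.
  destruct (LambertW_scaled_spec T HT) as [Hw _].
  pose proof (lambert_shift_fixpoint T HT) as Hfix.
  set (v := lambert_shift k a T) in *.
  assert (Hv : - v < Rabs a).
  { assert (a * T <= Rabs a) by (pose proof (Rle_abs a); pose proof (Rabs_pos a); nra).
    unfold v, lambert_shift; lra. }
  pose proof (exp_increasing _ _ Hv); pose proof (exp_pos (- v)).
  pose proof (Rle_abs a); pose proof (Rle_abs (- a)); rewrite Rabs_Ropp in *.
  assert (Hb : - C <= k * exp (- v) - a <= C) by (unfold C; split; nra).
  rewrite Hfix; destruct Hb; split; nra.
Qed.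

Lemma exp_lambert_shift_expansion T : 0 < T ->
  exp (lambert_shift k a T)
  = 1 + (k - a) * T + T * taylor_defect k a (lambert_shift k a T).
Proof.
  intros HT; pose proof (lambert_shift_fixpoint T HT) as Hfix.
  set (v := lambert_shift k a T) in *.
  replace (exp v) with (1 + (exp v - 1)) by ring.
  rewrite exp_sub1_factor, Hfix at 1; unfold taylor_defect; ring.
Qed.

Lemma lambert_shift_bounded T : 0 < a -> 0 < T ->
  Rabs (lambert_shift k a T) <= k / a + a / k.
Proof.
  intros Ha HT; pose proof (lambert_shift_fixpoint T HT) as Hfix.
  set (v := lambert_shift k a T) in *.
  pose proof (exp_ineq1_le v); pose proof (exp_ineq1_le (- v)).
  pose proof (exp_pos v); pose proof (exp_pos (- v)).
  assert (Hinv : exp v * exp (- v) = 1)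
    by (rewrite <- exp_plus, Rplus_opp_r; apply exp_0).
  assert (Hka : k / a * a = k) by (field; lra).
  assert (Hak : a / k * k = a) by (field; lra).
  assert (0 < k / a) by (apply Rdiv_lt_0_compat; lra).
  assert (0 < a / k) by (apply Rdiv_lt_0_compat; lra).
  apply Rabs_le; destruct (Rle_or_lt 0 v) as [Hv|Hv].
  - assert (a <= k * exp (- v)) by nra.
    assert (a * exp v <= k) by nra.
    split; nra.
  - assert (k * exp (- v) < a) by nra.
    split; nra.
Qed.

Lemma lambert_shift_div_cvg_p_infty : 0 < a ->
  is_lim (fun T => lambert_shift k a T / T) p_infty 0.
Proof.
  intros Ha; set (B := k / a + a / k).
  assert (Hdecay : forall s, is_lim (fun T => s * B / T) p_infty 0).
  { intros s; replace (Finite 0) with (Rbar_div (s * B) p_infty)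
      by (simpl; f_equal; ring).
    apply is_lim_div; [apply is_lim_const|apply is_lim_id|discriminate|exact I]. }
  apply (is_lim_le_le_loc (fun T => -1 * B / T) (fun T => 1 * B / T));
    [|apply Hdecay|apply Hdecay].
  exists 0; intros T HT.
  pose proof (proj1 (Rabs_le_between _ _) (lambert_shift_bounded T Ha HT)); unfold Rdiv.
  pose proof (Rinv_0_lt_compat T HT).
  unfold B; split; apply Rmult_le_compat_r; lra.
Qed.

End LambertShift.

Theorem lemma3 (r nu mu eta sigma s0 lambda gamma : R)
  (Heta : 0 < eta) (Hsigma : 0 < sigma) (Hs0 : 0 < s0)
  (Hlambda : 0 < lambda) (Hgamma : 0 < gamma) :
  (exists eps : R -> R,
      (forall T : R, 0 < T ->
         rho_star r nu mu eta sigma s0 lambda gamma T =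
         (mu - r) / sigma *
           (1 / (eta * s0 * lambda * gamma)
            + (eta - (nu - eta ^ 2 / 2) / (eta * s0 * lambda * gamma)) * T)
         + T * eps T)
      /\ filterlim eps (at_right 0) (locally 0))
  /\
  (eta ^ 2 / 2 < nu ->
     is_lim (rho_star r nu mu eta sigma s0 lambda gamma) p_infty
       ((mu - r) / sigma * (eta / (nu - eta ^ 2 / 2)))).
Proof.
  assert (Hrho : forall T, rho_star r nu mu eta sigma s0 lambda gamma T
    = (mu - r) / sigma * eta
      * (T / LambertW (lambda * gamma * s0 * eta ^ 2 * T * exp ((nu - eta ^ 2 / 2) * T))))
    by (intros T; unfold rho_star, Rdiv; ring).
  set (k := lambda * gamma * s0 * eta ^ 2) in *; set (a := nu - eta ^ 2 / 2) in *.
  set (c := (mu - r) / sigma) in *; set (c0 := c / (eta * s0 * lambda * gamma)).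
  assert (Hk : 0 < k) by (unfold k; repeat apply Rmult_lt_0_compat; try apply pow_lt; lra).
  split.
  - exists (fun T => c0 * taylor_defect k a (lambert_shift k a T)); split.
    + intros T HT.
      rewrite Hrho, (ratio_LambertW_exp k a Hk T HT),
        (exp_lambert_shift_expansion k a Hk T HT).
      unfold c0, k; field; lra.
    + replace 0 with (c0 * taylor_defect k a 0) at 2 by (rewrite taylor_defect_0; ring).
      apply (filterlim_comp _ _ _ _ (fun u => c0 * taylor_defect k a u) _ _ _
               (lambert_shift_cvg_0 k a Hk)).
      pose proof (taylor_defect_continuous_0 k a).
      apply (continuity_pt_filterlim (fun u => _)); reg.
  - intros Hnu; assert (Ha : 0 < a) by (unfold a; lra).
    apply (is_lim_ext_loc (fun T => c * eta * / (a + lambert_shift k a T / T))).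
    { exists 0; intros T HT; rewrite Hrho, (ratio_LambertW_shift k a Hk T HT); reflexivity. }
    replace (c * (eta / a)) with (c * eta * / (a + 0)) by (rewrite Rplus_0_r; field; lra).
    apply (filterlim_comp _ _ _ _ (fun u => c * eta * / (a + u)) _ _ _
             (lambert_shift_div_cvg_p_infty k a Hk Ha)).
    apply (continuity_pt_filterlim (fun u => _)); reg; lra.
Qed.
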